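(* Let $G$ be a graph. (i) If some connected component of $G$ has a degree sequence of cardinality $r>2$, then $K(H(G,x))\ge 2$. (ii) For each integer $r\ge 1$ there exists a graph $G$ whose degree sequence has cardinality $r$ and with $K(H(G,x))=1$.
   Context: All graphs are finite, simple and have no isolated vertices; $d_u$ is the degree of $u$. The harmonic polynomial is $H(G,x)=\sum_{uv\in E(G)}x^{d_u+d_v-1}$. For a polynomial $p$, $K(p(x))$ is the number of its non-zero coefficients. The degree sequence of a graph is the set of distinct vertex degree values, and its cardinality is the number of distinct vertex degrees. *)

From mathcomp Require Import all_boot all_order all_algebra.
Set Implicit Arguments. Unset Strict Implicit. Unset Printing Implicit Defensive.
Import GRing.Theory.
Local Open Scope ring_scope.

Definition is_graph (T : finType) (e : rel T) : Prop :=
  symmetric e /\ irreflexive e /\ (forall u : T, exists v : T, e u v).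

Definition deg (T : finType) (e : rel T) (u : T) : nat := #|[set v | e u v]|.

Definition edges (T : finType) (e : rel T) : {set {set T}} :=
  [set E : {set T} | [exists u, exists v, e u v && (E == [set u; v])]].

Definition harmonic_poly (T : finType) (e : rel T) : {poly int} :=
  \sum_(E in edges e) 'X^((\sum_(w in E) deg e w) - 1)%N.

Definition Kcoef (p : {poly int}) : nat := count (fun c : int => c != 0) p.

(* the degree sequence (set of distinct degree values) of the connected
   component of G containing x; degrees in the component equal those in G *)
Definition comp_degree_set (T : finType) (e : rel T) (x : T) : seq nat :=
  undup [seq deg e y | y <- enum [set y | connect e x y]].

Definition degree_set_card (T : finType) (e : rel T) : nat :=
  size (undup [seq deg e y | y <- enum T]).

(* The coefficient of x^k in H(G,x) counts the edges uv with d_u + d_v - 1 = k,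
   so it is non-negative and K(H(G,x)) is the number of distinct edge degree
   sums d_u + d_v.

   (i) If K(H(G,x)) <= 1, every edge uv has the same sum d_u + d_v = s.  Then
   along any edge a degree d is followed by s - d, so every vertex connected
   to x has degree d_x or s - d_x: each component has at most two degrees.

   (ii) The disjoint union of the complete bipartite graphs K_(a+1, r-a),
   0 <= a < r, has edge sum (a+1) + (r-a) = r+1 everywhere, so H(G,x) is a
   multiple of x^r, while its component a realises the degrees a+1 and r-a,
   hence all of 1, ..., r. *)

From mathcomp Require Import all_boot all_order all_algebra zify.
Import GRing.Theory Num.Theory.

Set Implicit Arguments. Unset Strict Implicit. Unset Printing Implicit Defensive.

Definition support_exps (p : {poly int}) : seq nat :=
  [seq i <- iota 0 (size p) | (p`_i != 0)%R].

Lemma Kcoef_support (p : {poly int}) : Kcoef p = size (support_exps p).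
Proof.
by rewrite /Kcoef size_filter -{1}(mkseq_nth 0%R (polyseq p)) /mkseq count_map.
Qed.

Lemma mem_support_exps (p : {poly int}) i :
  (i \in support_exps p) = (p`_i != 0)%R.
Proof.
rewrite mem_filter mem_iota /= andb_idr // => nz.
by rewrite ltnNge; apply: contra nz => /leq_sizeP ->.
Qed.

Lemma Kcoef_ge2 (p : {poly int}) i j :
  (p`_i != 0)%R -> (p`_j != 0)%R -> i != j -> 2 <= Kcoef p.
Proof.
move=> nzi nzj neq; rewrite Kcoef_support.
apply: (@uniq_leq_size _ [:: i; j]); first by rewrite /= inE neq.
by move=> k; rewrite !inE => /orP [] /eqP ->; rewrite mem_support_exps.
Qed.

Lemma Kcoef_monomial k n : 0 < n -> Kcoef ('X^k *+ n)%R = 1.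
Proof.
move=> n_gt0; rewrite Kcoef_support.
have supp : support_exps ('X^k *+ n)%R =i [:: k].
  move=> i; rewrite mem_support_exps coefMn coefXn mulrn_eq0 pnatr_eq0 inE.
  by case: (i == k); rewrite /= ?oner_eq0 ?eqxx ?orbT ?orbF -?lt0n.
have uniq_supp : uniq (support_exps ('X^k *+ n)%R) by apply/filter_uniq/iota_uniq.
by rewrite (perm_size (uniq_perm uniq_supp _ supp)).
Qed.

Section HarmonicPolynomial.

Variables (T : finType) (e : rel T).
Hypothesis e_irr : irreflexive e.

Lemma edgesP E : reflect (exists u v, e u v /\ E = [set u; v]) (E \in edges e).
Proof.
rewrite inE; apply: (iffP existsP) => [[u /existsP [v /andP [euv /eqP ->]]]|].
  by exists u, v.
by move=> [u [v [euv ->]]]; exists u; apply/existsP; exists v; rewrite euv eqxx.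
Qed.

Lemma deg_gt0 u v : e u v -> 0 < deg e u.
Proof. by move=> euv; apply/card_gt0P; exists v; rewrite inE. Qed.

Lemma edge_degree_sum u v :
  e u v -> \sum_(w in [set u; v]) deg e w = deg e u + deg e v.
Proof.
move=> euv; have neq_uv : u != v by apply: contraTneq euv => ->; rewrite e_irr.
by rewrite big_setU1 ?big_set1 ?inE.
Qed.

(* Every edge contributes its monomial with a positive coefficient: all the
   coefficients of H(G,x) are non-negative, so no cancellation can occur. *)
Lemma coef_harmonic_edge u v :
  e u v -> ((harmonic_poly e)`_(deg e u + deg e v - 1) != 0)%R.
Proof.
move=> euv; have uv_edge : [set u; v] \in edges e by apply/edgesP; exists u, v.
rewrite /harmonic_poly coef_sum (bigD1 _ uv_edge) /= edge_degree_sum //.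
rewrite coefXn eqxx; apply: lt0r_neq0; apply: ltr_pwDl => //.
by apply: sumr_ge0 => E _; rewrite coefXn ler0n.
Qed.

Lemma Kcoef_harmonic_ge2 u v u' v' : e u v -> e u' v' ->
  deg e u + deg e v != deg e u' + deg e v' -> 2 <= Kcoef (harmonic_poly e).
Proof.
move=> euv euv' neq; apply: Kcoef_ge2 (coef_harmonic_edge euv) (coef_harmonic_edge euv') _.
move: neq (deg_gt0 euv) (deg_gt0 euv'); lia.
Qed.

Definition const_edge_sum (s : nat) : Prop :=
  forall u v, e u v -> deg e u + deg e v = s.

Lemma harmonic_const_edge_sum s :
  const_edge_sum s -> harmonic_poly e = ('X^(s - 1) *+ #|edges e|)%R.
Proof.
move=> const_s; rewrite /harmonic_poly -sumr_const; apply: eq_bigr => E.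
by move=> /edgesP [u [v [euv ->]]]; rewrite edge_degree_sum ?const_s.
Qed.

Lemma Kcoef_harmonic_const s u v :
  const_edge_sum s -> e u v -> Kcoef (harmonic_poly e) = 1.
Proof.
move=> const_s euv; rewrite (harmonic_const_edge_sum const_s) Kcoef_monomial //.
by apply/card_gt0P; exists [set u; v]; apply/edgesP; exists u, v.
Qed.

(* With a constant edge sum s, degrees alternate between d and s - d along
   every edge, so the component of x only sees the degrees d_x and s - d_x. *)
Lemma comp_degree_set_const s x :
  const_edge_sum s -> size (comp_degree_set e x) <= 2.
Proof.
move=> const_s.
pose two_degrees := [pred z | (deg e z == deg e x) || (deg e z + deg e x == s)].
have closed_two : closed e two_degrees.
  move=> z w ezw; have := const_s z w ezw; rewrite !inE => sum_zw.
  by rewrite orbC; congr (_ || _); apply/eqP/eqP; lia.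
suff : size (comp_degree_set e x) <= size [:: deg e x; s - deg e x] by [].
apply: uniq_leq_size; first exact: undup_uniq.
move=> d; rewrite mem_undup => /mapP [z]; rewrite mem_enum inE => xz ->.
have := closed_connect closed_two xz; rewrite !inE eqxx /= => /esym.
by case/orP => /eqP dz; rewrite ?dz ?eqxx // -dz addnK eqxx orbT.
Qed.

End HarmonicPolynomial.

(* Part (i): if K(H(G,x)) <= 1 all edges share one degree sum, which leaves at
   most two degrees in every component. *)
Lemma Kcoef_harmonic_ge2_of_component (T : finType) (e : rel T) :
  is_graph e -> (exists x : T, 2 < size (comp_degree_set e x)) ->
  2 <= Kcoef (harmonic_poly e).
Proof.
move=> [_ [e_irr e_nbr]] [x many_degrees]; have [y exy] := e_nbr x.
pose other_sum u v := e u v && (deg e u + deg e v != deg e x + deg e y).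
have [/existsP [u /existsP [v /andP [euv neq]]]|] := boolP [exists u, exists v, other_sum u v].
  exact: (Kcoef_harmonic_ge2 e_irr euv exy neq).
move/existsPn => no_other.
have const_xy : const_edge_sum e (deg e x + deg e y).
  move=> u v euv; apply/eqP; move/existsPn/(_ v): (no_other u).
  by rewrite /other_sum euv negbK.
by move: many_degrees; rewrite ltnNge (comp_degree_set_const x const_xy).
Qed.

Lemma card_ord_le n a : a < n -> #|[set j : 'I_n | j <= a]| = a.+1.
Proof.
move=> lt_an; have widen_inj : injective (widen_ord lt_an).
  by move=> j k /(congr1 val) /= /val_inj.
rewrite -[RHS]card_ord -(card_imset _ widen_inj).
apply: eq_card => j; rewrite inE; apply/idP/imsetP => [le_ja|[k _ ->]]; last exact: ltn_ord k.
by exists (Ordinal (le_ja : j < a.+1)) => //; apply: val_inj.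
Qed.

Lemma card_ord_gt n a : a < n -> #|[set j : 'I_n | a < j]| = n - a.+1.
Proof.
move=> lt_an; rewrite cardsCs card_ord -[X in _ = _ - X](card_ord_le lt_an).
by congr (_ - _); apply: eq_card => j; rewrite !inE -leqNgt.
Qed.

Section BipartiteFamily.

(* Vertex (a, i) lies in the a-th component, on the small side when i <= a
   (a+1 vertices) and on the large side otherwise (r-a vertices). *)
Variable r : nat.

Definition bip_vertex : finType := ('I_r * 'I_r.+1)%type.

Definition small_side (p : bip_vertex) : bool := p.2 <= p.1.

Definition bipartite_family : rel bip_vertex :=
  fun p q => (p.1 == q.1) && (small_side p != small_side q).

Lemma deg_bipartite_family p :
  deg bipartite_family p = if small_side p then r - p.1 else (p.1).+1.
Proof.
case: p => a i; rewrite /deg /small_side /=.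
have -> : [set q | bipartite_family (a, i) q] =
    [set (a, j) | j in [set j : 'I_r.+1 | (i <= a) != (j <= a)]].
  apply/setP => -[b j]; rewrite inE /bipartite_family /small_side /=.
  apply/idP/imsetP => [/andP [/eqP <- side]|[k]]; first by exists j; rewrite ?inE.
  by rewrite inE => side [-> ->]; rewrite eqxx side.
rewrite card_imset; last by move=> j k [].
have lt_ar : a < r.+1 by rewrite ltnS ltnW.
case: (i <= a).
  by rewrite -[RHS](card_ord_gt lt_ar); apply: eq_card => j; rewrite !inE ltnNge.
by rewrite -[RHS](card_ord_le lt_ar); apply: eq_card => j; rewrite !inE; case: (j <= a).
Qed.

(* Each component K_(a+1, r-a) has degrees r-a and a+1, summing to r+1. *)
Lemma bipartite_family_const_sum : const_edge_sum bipartite_family r.+1.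
Proof.
move=> [a i] [b j] /andP [/= /eqP <- sides]; rewrite !deg_bipartite_family.
move: sides (ltn_ord a); rewrite /small_side /=.
by case: (i <= a); case: (j <= a) => //= _; lia.
Qed.

Lemma bipartite_family_nbr p : exists q, bipartite_family p q.
Proof.
case: p => a i; rewrite /bipartite_family /small_side /=.
case: (boolP (i <= a)) => side.
  by exists (a, ord_max); rewrite eqxx /= -ltnNge ltn_ord.
by exists (a, ord0); rewrite eqxx.
Qed.

Lemma bipartite_family_is_graph : is_graph bipartite_family.
Proof.
split; last split; last exact: bipartite_family_nbr.
  by move=> p q; rewrite /bipartite_family eq_sym; congr (_ && _); rewrite eq_sym.
by move=> p; rewrite /bipartite_family !eqxx.
Qed.

(* Component a realises the degrees a+1 and r-a, so all of 1, ..., r occur. *)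
Lemma bipartite_family_degrees :
  [seq deg bipartite_family p | p <- enum bip_vertex] =i iota 1 r.
Proof.
move=> k; rewrite mem_iota; apply/mapP/idP.
  move=> [[a i] _ ->]; rewrite deg_bipartite_family; have := ltn_ord a.
  by case: (small_side _) => /= lt_ar; lia.
move=> /andP [k_gt0 k_le]; have lt_rk : r - k < r by lia.
exists (Ordinal lt_rk, ord0); first by rewrite mem_enum.
by rewrite deg_bipartite_family /small_side /=; lia.
Qed.

End BipartiteFamily.

Lemma size_undup_eq_mem (X : eqType) (s1 s2 : seq X) :
  s1 =i s2 -> size (undup s1) = size (undup s2).
Proof.
move=> eq_s; apply: perm_size; apply: uniq_perm; rewrite ?undup_uniq //.
by move=> x; rewrite !mem_undup.
Qed.

Section Relabel.

Variables (T : finType) (e : rel T).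

Definition relabel : rel 'I_#|T| := fun u v => e (enum_val u) (enum_val v).

Lemma deg_relabel u : deg relabel u = deg e (enum_val u).
Proof.
rewrite /deg -[LHS](card_imset _ enum_val_inj); apply: eq_card => w.
rewrite [RHS]inE; apply/imsetP/idP => [[v]|ew]; first by rewrite inE => ? ->.
by exists (enum_rank w); rewrite ?inE /relabel enum_rankK.
Qed.

Lemma relabel_is_graph : is_graph e -> is_graph relabel.
Proof.
move=> [e_sym [e_irr e_nbr]]; split; last split.
- by move=> u v; apply: e_sym.
- by move=> u; apply: e_irr.
- move=> u; have [w euw] := e_nbr (enum_val u).
  by exists (enum_rank w); rewrite /relabel enum_rankK.
Qed.

Lemma relabel_const_sum s : const_edge_sum e s -> const_edge_sum relabel s.
Proof. by move=> const_s u v euv; rewrite !deg_relabel const_s. Qed.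

Lemma relabel_degrees :
  [seq deg relabel u | u <- enum 'I_#|T|] =i [seq deg e x | x <- enum T].
Proof.
move=> d; apply/mapP/mapP => [[u _ ->]|[x _ ->]].
  by exists (enum_val u); rewrite ?mem_enum ?deg_relabel.
by exists (enum_rank x); rewrite ?mem_enum // deg_relabel enum_rankK.
Qed.

End Relabel.

(* Part (ii): the relabelled family of K_(a+1, r-a), a < r, has the r degrees
   1, ..., r and constant edge sum r+1, hence H(G,x) = |E(G)| x^r. *)
Lemma harmonic_monomial_graph r : 1 <= r ->
  exists (n : nat) (e : rel 'I_n),
    is_graph e /\ degree_set_card e = r /\ Kcoef (harmonic_poly e) = 1.
Proof.
move=> r_gt0; set G := relabel (@bipartite_family r).
have G_graph : is_graph G := relabel_is_graph (bipartite_family_is_graph r).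
exists _, G; split; [exact: G_graph | split].
  rewrite /degree_set_card -[RHS](size_iota 1 r) -(undup_id (iota_uniq 1 r)).
  apply: size_undup_eq_mem => d.
  by rewrite relabel_degrees bipartite_family_degrees.
have [_ [G_irr G_nbr]] := G_graph.
have [v Guv] := G_nbr (enum_rank ((Ordinal r_gt0, ord0) : bip_vertex r)).
have G_const : const_edge_sum G r.+1.
  exact: relabel_const_sum (@bipartite_family_const_sum r).
exact: (Kcoef_harmonic_const G_irr G_const Guv).
Qed.

Theorem theorem17 :
  (forall (T : finType) (e : rel T), is_graph e ->
     (exists x : T, (2 < size (comp_degree_set e x))%N) ->
     2 <= Kcoef (harmonic_poly e))
  /\
  (forall r : nat, 1 <= r ->
     exists (n : nat) (e : rel 'I_n),
       is_graph e /\ degree_set_card e = r /\ Kcoef (harmonic_poly e) = 1).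
Proof.
split; [exact: Kcoef_harmonic_ge2_of_component | exact: harmonic_monomial_graph].
Qed.
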